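(* Let $H$ be a separable complex Hilbert space and $X$ a locally compact space with positive Borel measure $\mu$, and assume $F\subset J_1:=L^1(X,H)$, with norm $\|f\|_{J_1}=\int_X\|f(x)\|_H\,d\mu(x)$. Suppose the map $\sigma:F_0\to\overline{F}_0$ is continuous in the topology of $J_1$. Then the map $U:F_0\to U(H)$ is continuous from the topology of $J_1$ to the operator norm topology.
   Context: A frame on $H$ is a map $f:X\to H$ such that $x\mapsto\langle\phi,f(x)\rangle$ is measurable for every $\phi\in H$ and there exist $0<A\le B$ with $A\|\phi\|^2\le\int_X|\langle\phi,f(x)\rangle|^2d\mu(x)\le B\|\phi\|^2$ for all $\phi$; it is Parseval if $A=B=1$. $U(H)$ is the unitary group. $F$ is the set of frames $f$ with $\sup_x\|f(x)\|_H<\infty$, $F_0$ the Parseval ones; $(Af)(x)=A[f(x)]$. $\overline{F}_0\subset F_0$ is a fixed transversal of $F_0/U(H)$ (exactly one element from each orbit $\{Vf:V\in U(H)\}$); each $f\in F_0$ factors uniquely as $f=U(f)\sigma(f)$ with $U(f)\in U(H)$ and $\sigma(f)\in\overline{F}_0$, defining the maps $U$ and $\sigma$. *)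

From HB Require Import structures.
From mathcomp Require Import all_boot all_order all_algebra.
From mathcomp Require Import all_classical all_reals all_analysis.
From mathcomp Require Import complex.
Set Implicit Arguments. Unset Strict Implicit. Unset Printing Implicit Defensive.
Import Order.TTheory GRing.Theory Num.Theory.
Local Open Scope classical_set_scope.
Local Open Scope ring_scope.

Section Hilbert.
Variables (R : realType) (H : lmodType R[i]) (ip : H -> H -> R[i]).

Definition hnorm (x : H) : R := Num.sqrt (complex.Re (ip x x)).

Definition is_inner_product : Prop :=
  [/\ (forall (a : R[i]) (x y z : H), ip (a *: x + y) z = a * ip x z + ip y z),
      (forall x y : H, ip y x = (ip x y)^*),
      (forall x : H, 0 <= ip x x) &
      (forall x : H, ip x x = 0 -> x = 0)].

Definition hcomplete : Prop :=
  forall u : nat -> H,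
    (forall e : R, 0 < e -> exists N : nat, forall m n : nat,
        (N <= m)%N -> (N <= n)%N -> hnorm (u m - u n) < e) ->
    exists l : H, forall e : R, 0 < e -> exists N : nat, forall n : nat,
        (N <= n)%N -> hnorm (u n - l) < e.

Definition hseparable : Prop :=
  exists d : nat -> H, forall (x : H) (e : R), 0 < e ->
    exists n : nat, hnorm (x - d n) < e.

Definition separable_hilbert : Prop :=
  [/\ is_inner_product, hcomplete & hseparable].

Definition unitary (V : H -> H) : Prop :=
  [/\ (forall (a : R[i]) (x y : H), V (a *: x + y) = a *: V x + V y),
      (forall y : H, exists x : H, V x = y) &
      (forall x y : H, ip (V x) (V y) = ip x y)].

Definition opnorm (T : H -> H) : \bar R :=
  ereal_sup [set ((hnorm (T phi))%:E)%E | phi in [set phi | hnorm phi <= 1]].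

End Hilbert.

Section Frames.
Variables (R : realType) (H : lmodType R[i]) (ip : H -> H -> R[i]).
Variables (X : ptopologicalType)
  (mu : {measure set (g_sigma_algebraType (@open X)) -> \bar R}).

Local Notation XB := (g_sigma_algebraType (@open X)).

Definition weakly_measurable (f : X -> H) : Prop :=
  forall phi : H,
    measurable_fun [set: XB] (fun x : XB => complex.Re (ip phi (f x))) /\
    measurable_fun [set: XB] (fun x : XB => complex.Im (ip phi (f x))).

Definition frame_int (f : X -> H) (phi : H) : \bar R :=
  (\int[mu]_(x in [set: XB]) ((ComplexField.Normc.normc (ip phi (f x)) ^+ 2)%:E))%E.

Definition is_frame (f : X -> H) : Prop :=
  weakly_measurable f /\
  exists A B : R, [/\ 0 < A, A <= B &
    forall phi : H,
      ((A * hnorm ip phi ^+ 2)%:E <= frame_int f phi)%E /\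
      (frame_int f phi <= (B * hnorm ip phi ^+ 2)%:E)%E].

Definition is_parseval (f : X -> H) : Prop :=
  weakly_measurable f /\
  forall phi : H, frame_int f phi = ((hnorm ip phi ^+ 2)%:E)%E.

Definition Fset : set (X -> H) :=
  [set f | is_frame f /\ exists M : R, forall x : X, hnorm ip (f x) <= M].
Definition F0set : set (X -> H) :=
  [set f | is_parseval f /\ exists M : R, forall x : X, hnorm ip (f x) <= M].

Definition inJ1 (f : X -> H) : Prop :=
  measurable_fun [set: XB] (fun x : XB => hnorm ip (f x)) /\
  ((\int[mu]_(x in [set: XB]) (hnorm ip (f x))%:E) < +oo)%E.

Definition distJ1 (f g : X -> H) : \bar R :=
  (\int[mu]_(x in [set: XB]) (hnorm ip (f x - g x))%:E)%E.

Definition is_F0_transversal (Fb : set (X -> H)) : Prop :=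
  Fb `<=` F0set /\
  forall f, F0set f -> exists! g, Fb g /\ exists V, unitary ip V /\ f = V \o g.

Definition J1_continuous_on_F0 (s : (X -> H) -> (X -> H)) : Prop :=
  forall f, F0set f -> forall e : R, 0 < e -> exists2 d : R, 0 < d &
    forall g, F0set g -> (distJ1 f g < d%:E)%E -> (distJ1 (s f) (s g) < e%:E)%E.

Definition J1_opnorm_continuous_on_F0 (U : (X -> H) -> (H -> H)) : Prop :=
  forall f, F0set f -> forall e : R, 0 < e -> exists2 d : R, 0 < d &
    forall g, F0set g -> (distJ1 f g < d%:E)%E ->
      (opnorm ip (fun phi => (U f phi - U g phi)%R) < e%:E)%E.

End Frames.

(* Fix psi with |psi| <= 1 and put v := (U f - U g) psi. Since f = U f o sigma f
   and g = U g o sigma g with U f, U g unitary,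
     <v, f x> = <psi, sigma f x - sigma g x> - <U g psi, f x - g x>.
   The Parseval identity for f and a bound |f x| <= M give
     |v|^2 = int |<v, f x>|^2 <= M |v| int |<v, f x>|,
   hence |v| <= M (|sigma f - sigma g|_J1 + |f - g|_J1) uniformly in psi, and
   the continuity of sigma concludes. *)

From HB Require Import structures.
From mathcomp Require Import all_boot all_order all_algebra.
From mathcomp Require Import all_classical all_reals all_analysis.
From mathcomp Require Import complex.
From mathcomp Require Import ring measurable_realfun.
Import Order.TTheory GRing.Theory Num.Theory.
Set Implicit Arguments. Unset Strict Implicit.
Local Open Scope classical_set_scope.
Local Open Scope complex_scope.
Local Open Scope ring_scope.

Local Notation normc := ComplexField.Normc.normc.

Lemma normcE (R : rcfType) (z : R[i]) : `|z| = (normc z)%:C.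
Proof. by case: z. Qed.

Lemma normc_ge0 (R : rcfType) (z : R[i]) : 0 <= normc z.
Proof. by case: z => a b; exact: sqrtr_ge0. Qed.

Lemma normcB (R : rcfType) (u v : R[i]) : normc (u - v) <= normc u + normc v.
Proof. by rewrite -lecR rmorphD /= -!normcE ler_normB. Qed.

Lemma ReB (R : rcfType) (u v : R[i]) :
  complex.Re (u - v) = complex.Re u - complex.Re v.
Proof. by case: u; case: v. Qed.

Lemma ImB (R : rcfType) (u v : R[i]) :
  complex.Im (u - v) = complex.Im u - complex.Im v.
Proof. by case: u; case: v. Qed.

Section InnerProduct.
Variables (R : realType) (H : lmodType R[i]) (ip : H -> H -> R[i]).
Hypothesis ipH : is_inner_product ip.

Lemma ip0l z : ip 0 z = 0.
Proof.
case: ipH => lin _ _ _; have := lin 1 0 0 z.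
by rewrite scaler0 addr0 mul1r => /eqP; rewrite addrC -subr_eq subrr eq_sym => /eqP.
Qed.

Lemma ipDl x y z : ip (x + y) z = ip x z + ip y z.
Proof. by case: ipH => lin _ _ _; have := lin 1 x y z; rewrite scale1r mul1r. Qed.

Lemma ipZl a x z : ip (a *: x) z = a * ip x z.
Proof. by case: ipH => lin _ _ _; have := lin a x 0 z; rewrite !addr0 ip0l addr0. Qed.

Lemma ipBl x y z : ip (x - y) z = ip x z - ip y z.
Proof. by rewrite ipDl -scaleN1r ipZl mulN1r. Qed.

Lemma ip_conj x y : ip y x = (ip x y)^*.
Proof. by case: ipH. Qed.

Lemma ipZr a x z : ip z (a *: x) = a^* * ip z x.
Proof. by rewrite ip_conj ipZl rmorphM /= -ip_conj. Qed.

Lemma ipBr x y z : ip z (x - y) = ip z x - ip z y.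
Proof. by rewrite ip_conj ipBl rmorphB /= -!ip_conj. Qed.

Lemma ip0r z : ip z 0 = 0.
Proof. by rewrite ip_conj ip0l rmorph0. Qed.

Lemma ip_ge0 x : 0 <= ip x x.
Proof. by case: ipH. Qed.

Lemma ip_real x : (ip x x)^* = ip x x.
Proof. exact/conj_Creal/ger0_real/ip_ge0. Qed.

Lemma ip_hnorm x : ip x x = (hnorm ip x ^+ 2)%:C.
Proof.
have := ip_ge0 x; rewrite /hnorm; case: (ip x x) => a b.
by rewrite lecE /= => /andP[/eqP -> a0]; rewrite sqr_sqrtr.
Qed.

Lemma hnorm_ge0 x : 0 <= hnorm ip x.
Proof. exact: sqrtr_ge0. Qed.

Lemma cauchy_schwarz a b : `|ip a b| ^+ 2 <= ip a a * ip b b.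
Proof.
have [b0|bn0] := eqVneq (ip b b) 0.
  case: ipH => _ _ _ /(_ _ b0) ->.
  by rewrite ip0r normr0 expr0n mulr_ge0 // ip_ge0.
have bpos : 0 < ip b b by rewrite lt_def bn0 ip_ge0.
set c := ip a b; pose t := c / ip b b.
(* [0 <= <a - t b, a - t b>] for the minimizing [t] *)
have := ip_ge0 (a - t *: b).
rewrite ipBl !ipBr !ipZl !ipZr (ip_conj a b) -/c.
have -> : t^* = c^* / ip b b by rewrite rmorphM /= fmorphV /= ip_real.
have -> : ip a a - c^* / ip b b * c - (t * c^* - t * (c^* / ip b b * ip b b))
   = ip a a - c * c^* / ip b b by rewrite /t; field.
by rewrite subr_ge0 normCK ler_pdivrMr.
Qed.

Lemma normc_ip_le a b : normc (ip a b) <= hnorm ip a * hnorm ip b.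
Proof.
have := cauchy_schwarz a b.
rewrite !ip_hnorm normcE -!rmorphXn -rmorphM lecR -exprMn.
by rewrite ler_sqr ?nnegrE ?normc_ge0 ?mulr_ge0 ?hnorm_ge0.
Qed.

Lemma unitary_hnorm V x : unitary ip V -> hnorm ip (V x) = hnorm ip x.
Proof. by case=> _ _ VP; rewrite /hnorm VP. Qed.

Lemma ip_unitaryB Uf Ug psi s t : unitary ip Uf -> unitary ip Ug ->
  ip (Uf psi - Ug psi) (Uf s) = ip psi (s - t) - ip (Ug psi) (Uf s - Ug t).
Proof. by case=> _ _ UfP [_ _ UgP]; rewrite ipBl !ipBr UfP UgP; ring. Qed.

Lemma opnorm_le (T : H -> H) (c : \bar R) :
  (forall phi, hnorm ip phi <= 1 -> ((hnorm ip (T phi))%:E <= c)%E) ->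
  (opnorm ip T <= c)%E.
Proof. by move=> Tc; apply: ge_ereal_sup => _ [phi /Tc ? <-]. Qed.

End InnerProduct.

(* Unlike [ge0_le_integral], no measurability is required: both sides are
   suprema over simple minorants. *)
Lemma ge0_le_integralT d (T : measurableType d) (R : realType)
    (mu : {measure set T -> \bar R}) (f1 f2 : T -> \bar R) :
  (forall x, (0 <= f1 x)%E) -> (forall x, (f1 x <= f2 x)%E) ->
  (\int[mu]_(x in [set: T]) f1 x <= \int[mu]_(x in [set: T]) f2 x)%E.
Proof.
move=> f10 f12; have f20 x : (0 <= f2 x)%E := le_trans (f10 x) (f12 x).
rewrite !ge0_integralTE//; apply: ereal_sup_le => _ [h hf1 <-].
by exists h => //= x; exact: le_trans (hf1 x) (f12 x).
Qed.

Lemma measurable_normc d (T : measurableType d) (R : realType) (h : T -> R[i]) :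
  measurable_fun [set: T] (fun x => complex.Re (h x)) ->
  measurable_fun [set: T] (fun x => complex.Im (h x)) ->
  measurable_fun [set: T] (fun x => normc (h x)).
Proof.
move=> mRe mIm.
have -> : (fun x => normc (h x)) =
    (fun x => Num.sqrt (complex.Re (h x) ^+ 2 + complex.Im (h x) ^+ 2)).
  by apply/funext => x; case: (h x).
apply: measurableT_comp (continuous_measurable_fun (@sqrt_continuous R)) _.
by apply: measurable_funD; apply: measurable_funX.
Qed.

Section Frames.
Variables (R : realType) (H : lmodType R[i]) (ip : H -> H -> R[i]).
Variables (X : ptopologicalType)
  (mu : {measure set (g_sigma_algebraType (@open X)) -> \bar R}).
Hypothesis ipH : is_inner_product ip.

Local Notation XB := (g_sigma_algebraType (@open X)).

Lemma weakly_measurableB (f g : X -> H) :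
  weakly_measurable ip f -> weakly_measurable ip g ->
  weakly_measurable ip (f \- g).
Proof.
move=> mf mg phi; have [mfRe mfIm] := mf phi; have [mgRe mgIm] := mg phi.
by split; under eq_fun do rewrite /= ipBr // ?ReB ?ImB; exact: measurable_funB.
Qed.

Lemma measurable_normc_ip (f : X -> H) phi : weakly_measurable ip f ->
  measurable_fun [set: XB] (fun x : XB => (normc (ip phi (f x)))%:E).
Proof. by move=> mf; apply/measurable_EFinP/measurable_normc; case: (mf phi). Qed.

Lemma parseval_hnorm_le (f : X -> H) (M : R) v :
  is_parseval ip mu f -> 0 <= M -> (forall x, hnorm ip (f x) <= M) ->
  ((hnorm ip v)%:E <= M%:E * \int[mu]_(x in [set: XB]) (normc (ip v (f x)))%:E)%E.
Proof.
move=> [mf fP] M0 fM.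
have I0 : (0 <= \int[mu]_(x in [set: XB]) (normc (ip v (f x)))%:E)%E.
  by apply: integral_ge0 => x _; rewrite lee_fin normc_ge0.
have [v0|vpos] := eqVneq (hnorm ip v) 0; first by rewrite v0 mule_ge0.
have vgt0 : 0 < hnorm ip v by rewrite lt_def vpos hnorm_ge0.
have : ((hnorm ip v ^+ 2)%:E <=
    (hnorm ip v * M)%:E * \int[mu]_(x in [set: XB]) (normc (ip v (f x)))%:E)%E.
  rewrite -fP /frame_int -ge0_integralZl_EFin ?mulr_ge0 ?hnorm_ge0 //; last first.
    - exact: measurable_normc_ip.
    - by move=> x _; rewrite lee_fin normc_ge0.
  apply: ge0_le_integralT => x; rewrite lee_fin ?exprn_ge0 ?normc_ge0 //.
  rewrite expr2 ler_wpM2r ?normc_ge0 //.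
  apply: le_trans (normc_ip_le ipH _ _) _.
  by rewrite ler_wpM2l ?hnorm_ge0.
by rewrite expr2 !EFinM -muleA lee_pmul2l.
Qed.

Lemma integral_normc_ip_le_distJ1 (f g : X -> H) phi : hnorm ip phi <= 1 ->
  (\int[mu]_(x in [set: XB]) (normc (ip phi (f x - g x)))%:E <= distJ1 ip mu f g)%E.
Proof.
move=> phi1; apply: ge0_le_integralT => x; rewrite lee_fin ?normc_ge0 //.
apply: le_trans (normc_ip_le ipH _ _) _.
by rewrite -[leRHS]mul1r ler_wpM2r ?hnorm_ge0.
Qed.

Lemma unitary_factor_hnorm_le (f g sf sg : X -> H) Uf Ug (M : R) psi :
  is_parseval ip mu f -> 0 <= M -> (forall x, hnorm ip (f x) <= M) ->
  weakly_measurable ip g -> weakly_measurable ip sf -> weakly_measurable ip sg ->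
  unitary ip Uf -> unitary ip Ug -> f = Uf \o sf -> g = Ug \o sg ->
  hnorm ip psi <= 1 ->
  ((hnorm ip (Uf psi - Ug psi))%:E <=
     M%:E * (distJ1 ip mu sf sg + distJ1 ip mu f g))%E.
Proof.
move=> fP M0 fM mg msf msg Uf_unit Ug_unit ef eg psi1.
pose a x := (normc (ip psi (sf x - sg x)))%:E.
pose b x := (normc (ip (Ug psi) (f x - g x)))%:E.
have ma : measurable_fun [set: XB] a.
  exact: measurable_normc_ip (weakly_measurableB msf msg).
have mb : measurable_fun [set: XB] b.
  exact: measurable_normc_ip (weakly_measurableB fP.1 mg).
apply: le_trans (parseval_hnorm_le _ fP M0 fM) _.
apply: lee_wpmul2l; first by rewrite lee_fin.
apply: (@le_trans _ _ (\int[mu]_(x in [set: XB]) (a x + b x))%E).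
  apply: ge0_le_integralT => x; first by rewrite lee_fin normc_ge0.
  rewrite /a /b -EFinD lee_fin ef eg /= (ip_unitaryB ipH _ _ (sg x) Uf_unit Ug_unit).
  exact: normcB.
rewrite ge0_integralD //; try by move=> x _; rewrite lee_fin normc_ge0.
by apply: leeD; apply: integral_normc_ip_le_distJ1; rewrite ?unitary_hnorm.
Qed.

End Frames.

Theorem mainTheorem18 (R : realType) (H : lmodType R[i]) (ip : H -> H -> R[i])
  (X : ptopologicalType)
  (mu : {measure set (g_sigma_algebraType (@open X)) -> \bar R})
  (Fb : set (X -> H))
  (U : (X -> H) -> (H -> H)) (sigma : (X -> H) -> (X -> H)) :
  separable_hilbert ip ->
  locally_compact [set: X] ->
  (forall f, Fset ip mu f -> inJ1 ip mu f) ->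
  is_F0_transversal ip mu Fb ->
  (forall f, F0set ip mu f ->
     [/\ unitary ip (U f), Fb (sigma f) & f = U f \o sigma f]) ->
  J1_continuous_on_F0 ip mu sigma ->
  J1_opnorm_continuous_on_F0 ip mu U.
Proof.
move=> [ipH _ _] _ _ [FbF0 _] hU sigma_cont f F0f e e_gt0.
have [Uf_unit Fb_sf ef] := hU f F0f.
have [fP [M fM]] := F0f.
pose M1 := Num.max M 1.
have M1_gt0 : 0 < M1 by rewrite lt_max ltr01 orbT.
pose eta := e / (2 * M1).
have eta_gt0 : 0 < eta by rewrite divr_gt0 // mulr_gt0.
have [d d_gt0 sigma_near] := sigma_cont f F0f eta eta_gt0.
exists (Num.min d eta) => [|g F0g dfg]; first by rewrite lt_min d_gt0 eta_gt0.
have [Ug_unit Fb_sg eg] := hU g F0g.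
have [[msf _] _] := FbF0 _ Fb_sf.
have [[msg _] _] := FbF0 _ Fb_sg.
have dsigma : (distJ1 ip mu (sigma f) (sigma g) < eta%:E)%E.
  by apply: sigma_near F0g _; apply: lt_le_trans dfg _; rewrite lee_fin ge_min lexx.
have dfg_eta : (distJ1 ip mu f g < eta%:E)%E.
  by apply: lt_le_trans dfg _; rewrite lee_fin ge_min lexx orbT.
have fM1 x : hnorm ip (f x) <= M1 by rewrite le_max fM.
apply: le_lt_trans (opnorm_le (fun psi => unitary_factor_hnorm_le (psi:=psi)
  ipH fP (ltW M1_gt0) fM1 F0g.1.1 msf msg Uf_unit Ug_unit ef eg)) _.
have -> : e%:E = (M1%:E * (eta%:E + eta%:E))%E.
  by rewrite -EFinD -EFinM /eta; congr EFin; field; rewrite gt_eqF.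
by rewrite lte_pmul2l ?lte_fin //; exact: lteD.
Qed.
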